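(* Let $S$ be a monoid, $A$ an $S$-act and $\Sigma=\Sigma(X)$ a consistent set of equations over $A$; identify $A$ with its image in $A(\Sigma)$ under $\nu_\Sigma$. The following are equivalent: (1) $\Sigma$ has a solution in $A$; (2) $A$ is a retract of $A(\Sigma)$; (3) the $S$-morphism $\theta:D(\Sigma)\to A$, $([xs]v)\theta=av$ for $xs=a\in\Sigma$, $v\in S$, extends to an $S$-morphism $C(\Sigma)\to A$.
   Context: A (right) $S$-act is a set $A$ with a map $A\times S\to A$ such that $a1=a$, $a(st)=(as)t$. $F_S(X)$ is the free $S$-act on $X$. An equation over $A$ with variables from $X$ has one of the forms $xs=yt$, $xs=xt$, $xs=a$ ($x,y\in X$, $s,t\in S$, $a\in A$); a solution in $B\supseteq A$ is a family $(b_x)$ in $B$ satisfying all equations; $\Sigma$ is consistent if it has a solution in some $S$-act containing $A$. $H(\Sigma)=\{(xu,yv):xu=yv\in\Sigma\}$, $K(\Sigma)=\{(xs,a):xs=a\in\Sigma\}$; $\rho_\Sigma$ is the congruence on $F_S(X)$ generated by $H(\Sigma)$, $\kappa_\Sigma$ that on $A\sqcup F_S(X)$ generated by $H(\Sigma)\cup K(\Sigma)$; $A(\Sigma)=(A\sqcup F_S(X))/\kappa_\Sigma$, $C(\Sigma)=F_S(X)/\rho_\Sigma$, $D(\Sigma)=\bigcup_{xs=a\in\Sigma}[xs]S\subseteq C(\Sigma)$, $\nu_\Sigma:A\to A(\Sigma)$, $a\mapsto[a]$, which is injective when $\Sigma$ is consistent, and $\theta$ is then a well-defined $S$-morphism.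 $A$ is a retract of $A(\Sigma)$ if there is an $S$-morphism $A(\Sigma)\to A$ which is the identity on $A$. *)

From Stdlib Require Import ClassicalEpsilon.

Set Implicit Arguments.

Record monoid := Monoid {
  mcar :> Type;
  mmul : mcar -> mcar -> mcar;
  mone : mcar;
  mmulA : forall a b c, mmul a (mmul b c) = mmul (mmul a b) c;
  mmul1l : forall a, mmul mone a = a;
  mmul1r : forall a, mmul a mone = a
}.

Record act (S : monoid) := Act {
  acar :> Type;
  aop : acar -> S -> acar;
  aop1 : forall a, aop a (mone S) = a;
  aopM : forall a s t, aop a (mmul S s t) = aop (aop a s) t
}.
Arguments aop {S a0} _ _.

(** S-morphisms between sets carrying a right action of S
    (given here by the raw action maps, so that they can be used for
    quotient acts as well). *)
Definition is_morph (S : monoid) (T U : Type)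
  (opT : T -> S -> T) (opU : U -> S -> U) (f : T -> U) : Prop :=
  forall t s, f (opT t s) = opU (f t) s.

Inductive equation (S : monoid) (A : act S) (X : Type) :=
| EqVV : X -> S -> X -> S -> equation A X   (* x s = y t *)
| EqVC : X -> S -> A -> equation A X.       (* x s = a   *)

Arguments EqVV {S A X} _ _ _ _.
Arguments EqVC {S A X} _ _ _.

Definition system (S : monoid) (A : act S) (X : Type) := equation A X -> Prop.

Definition is_solution (S : monoid) (A B : act S) (X : Type)
  (iota : A -> B) (Sigma : system A X) (b : X -> B) : Prop :=
  (forall x s y t, Sigma (EqVV x s y t) -> aop (b x) s = aop (b y) t) /\
  (forall x s a, Sigma (EqVC x s a) -> aop (b x) s = iota a).

Definition consistent (S : monoid) (A : act S) (X : Type)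
  (Sigma : system A X) : Prop :=
  exists (B : act S) (iota : A -> B),
    @is_morph S A B aop aop iota /\
    (forall a a', iota a = iota a' -> a = a') /\
    exists b : X -> B, @is_solution S A B X iota Sigma b.

(** Free S-act F_S(X) = X x S with (x,s)t = (x,st); x s is (x,s). *)
Definition free_act (S : monoid) (X : Type) := (X * S)%type.
Definition free_op (S : monoid) (X : Type) (p : free_act S X) (t : S)
  : free_act S X := (fst p, mmul S (snd p) t).

Definition sum_op (S : monoid) (A : act S) (X : Type)
  (p : (A + free_act S X)%type) (t : S) : (A + free_act S X)%type :=
  match p with
  | inl a => inl (aop a t)
  | inr q => inr (free_op q t)
  end.

Inductive cong_gen (S : monoid) (T : Type) (op : T -> S -> T)
  (H : T -> T -> Prop) : T -> T -> Prop :=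
| cg_base : forall u v, H u v -> cong_gen S op H u v
| cg_refl : forall u, cong_gen S op H u u
| cg_sym : forall u v, cong_gen S op H u v -> cong_gen S op H v u
| cg_trans : forall u v w,
    cong_gen S op H u v -> cong_gen S op H v w -> cong_gen S op H u w
| cg_act : forall u v s, cong_gen S op H u v -> cong_gen S op H (op u s) (op v s).

Record quot (T : Type) (R : T -> T -> Prop) := Quot {
  qclass : T -> Prop;
  qclassP : exists u, qclass = R u
}.

Definition cls (T : Type) (R : T -> T -> Prop) (u : T) : quot R :=
  @Quot T R (R u) (ex_intro _ u eq_refl).

Definition rep (T : Type) (R : T -> T -> Prop) (q : quot R) : T :=
  proj1_sig (constructive_indefinite_description _ (qclassP q)).

Definition quot_op (S : monoid) (T : Type) (op : T -> S -> T)
  (R : T -> T -> Prop) (q : quot R) (s : S) : quot R :=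
  cls R (op (rep q) s).

Section Sigma.
Variables (S : monoid) (A : act S) (X : Type) (Sigma : system A X).

Definition H_rel (u v : free_act S X) : Prop :=
  exists x s y t, Sigma (EqVV x s y t) /\ u = (x, s) /\ v = (y, t).

Definition HK_rel (u v : (A + free_act S X)%type) : Prop :=
  (exists x s y t, Sigma (EqVV x s y t) /\ u = inr (x, s) /\ v = inr (y, t)) \/
  (exists x s a, Sigma (EqVC x s a) /\ u = inr (x, s) /\ v = inl a).

Definition rho : free_act S X -> free_act S X -> Prop :=
  @cong_gen S (free_act S X) (@free_op S X) H_rel.

Definition kappa : (A + free_act S X) -> (A + free_act S X) -> Prop :=
  @cong_gen S (A + free_act S X) (@sum_op S A X) HK_rel.

Definition ASigma := quot kappa.
Definition ASigma_op : ASigma -> S -> ASigma := @quot_op S _ (@sum_op S A X) kappa.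

Definition CSigma := quot rho.
Definition CSigma_op : CSigma -> S -> CSigma := @quot_op S _ (@free_op S X) rho.

Definition nu (a : A) : ASigma := cls kappa (inl a).

Definition DSigma (c : CSigma) : Prop :=
  exists x s a v, Sigma (EqVC x s a) /\ c = CSigma_op (cls rho (x, s)) v.

(** The graph of theta : D(Sigma) -> A,  ([xs]v)theta = a v  for xs = a in
    Sigma, v in S (a well-defined map when Sigma is consistent). *)
Definition theta_graph (c : CSigma) (b : A) : Prop :=
  exists x s a v, Sigma (EqVC x s a) /\
    c = CSigma_op (cls rho (x, s)) v /\ b = aop a v.

End Sigma.

From Stdlib Require Import FunctionalExtensionality PropExtensionality ProofIrrelevance ClassicalEpsilon.

Set Implicit Arguments.

(* Everything rests on the universal property of a quotient by a generated
   congruence: an S-morphism h : T -> U that identifies the generating pairs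
   identifies all congruent elements, and then factors through the quotient
   as an S-morphism [quot_lift h] with [quot_lift h [u] = h u].
   - (1) -> (2): a solution (b_x) in A defines the S-morphism A ⊔ F_S(X) -> A,
     a |-> a, xs |-> b_x s, which kills H(Sigma) ∪ K(Sigma); it factors through
     A(Sigma) and is the identity on nu_Sigma(A).
   - (2) -> (3): composing a retraction f with F_S(X) -> A(Sigma), u |-> [u],
     kills H(Sigma), so factors through C(Sigma); it sends [xs] to f[a] = a
     whenever xs = a is in Sigma, hence agrees with theta on D(Sigma).
   - (3) -> (1): an extension g of theta gives the solution b_x = g[x1],
     since g[xs] = b_x s by S-linearity.
   Consistency of Sigma is only needed to make theta a well-defined map; the
   equivalences themselves hold for every system. *)

Section Quotient.
Variables (S : monoid) (T : Type) (op : T -> S -> T) (H : T -> T -> Prop).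
Let C := cong_gen S op H.

Lemma quot_ext (q1 q2 : quot C) : qclass q1 = qclass q2 -> q1 = q2.
Proof.
  destruct q1 as [c1 p1], q2 as [c2 p2]; simpl; intros E; subst.
  f_equal; apply proof_irrelevance.
Qed.

Lemma cls_eq (u v : T) : C u v -> cls C u = cls C v.
Proof.
  intros Huv; apply quot_ext; simpl.
  apply functional_extensionality; intros w; apply propositional_extensionality.
  split; intros Hw.
  - eapply cg_trans; [apply cg_sym; exact Huv | exact Hw].
  - eapply cg_trans; [exact Huv | exact Hw].
Qed.

Lemma rep_cls (u : T) : C u (rep (cls C u)).
Proof.
  unfold rep; destruct (constructive_indefinite_description _ _) as [r Hr].
  exact (eq_ind _ (fun P => P r) (cg_refl S op H r) _ (eq_sym Hr)).
Qed.

Lemma quot_op_cls (u : T) (s : S) : quot_op S op (R := C) (cls C u) s = cls C (op u s).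
Proof. unfold quot_op; apply cls_eq, cg_act, cg_sym, rep_cls. Qed.

Lemma morph_cls_op (U : Type) (opU : U -> S -> U) (f : quot C -> U) :
  is_morph S (quot_op S op (R := C)) opU f ->
  forall (u : T) (s : S), f (cls C (op u s)) = opU (f (cls C u)) s.
Proof. intros Hf u s; rewrite <- quot_op_cls; apply Hf. Qed.

Section Lift.
Variables (U : Type) (opU : U -> S -> U) (h : T -> U).
Hypothesis h_morph : is_morph S op opU h.
Hypothesis h_gen : forall u v, H u v -> h u = h v.

Lemma cong_gen_respect (u v : T) : C u v -> h u = h v.
Proof.
  intros K; induction K as [u v Hb|u|u v _ IH|u v w _ IH1 _ IH2|u v s _ IH].
  - exact (h_gen Hb).
  - reflexivity.
  - symmetry; exact IH.
  - congruence.
  - rewrite !h_morph, IH; reflexivity.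
Qed.

Definition quot_lift (q : quot C) : U := h (rep q).

Lemma quot_lift_cls (u : T) : quot_lift (cls C u) = h u.
Proof. symmetry; apply cong_gen_respect, rep_cls. Qed.

Lemma quot_lift_morph : is_morph S (quot_op S op (R := C)) opU quot_lift.
Proof.
  intros q s; unfold quot_op; rewrite quot_lift_cls, h_morph; reflexivity.
Qed.

End Lift.
End Quotient.

Section Equivalences.
Variables (S : monoid) (A : act S) (X : Type) (Sigma : system A X).

Definition has_solution_in_A : Prop :=
  exists b : X -> A, is_solution A (fun a : A => a) Sigma b.

Definition is_retraction (f : ASigma Sigma -> A) : Prop :=
  is_morph S (@ASigma_op S A X Sigma) aop f /\ forall a : A, f (nu Sigma a) = a.

Definition extends_theta (g : CSigma Sigma -> A) : Prop :=
  is_morph S (@CSigma_op S A X Sigma) aop g /\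
  forall (c : CSigma Sigma) (b : A), theta_graph c b -> g c = b.

Lemma retraction_of_solution :
  has_solution_in_A -> exists f, is_retraction f.
Proof.
  intros [b [Hvv Hvc]].
  set (h := fun p : (A + free_act S X)%type =>
              match p with inl a => a | inr (x, s) => aop (b x) s end).
  assert (h_morph : is_morph S (@sum_op S A X) aop h).
  { intros [a|[x s]] t; simpl; [reflexivity | apply aopM]. }
  assert (h_gen : forall u v, HK_rel Sigma u v -> h u = h v).
  { intros u v [(x&s&y&t&E&->&->)|(x&s&a&E&->&->)]; simpl; auto. }
  exists (quot_lift (H := HK_rel Sigma) h); split.
  - exact (quot_lift_morph h_morph h_gen).
  - intros a; exact (quot_lift_cls (HK_rel Sigma) h_morph h_gen (inl a)).
Qed.

Lemma theta_extension_of_retraction (f : ASigma Sigma -> A) :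
  is_retraction f -> exists g, extends_theta g.
Proof.
  intros [Hf Hnu].
  set (h := fun u : free_act S X => f (cls (kappa Sigma) (inr u))).
  assert (h_morph : is_morph S (@free_op S X) aop h).
  { intros u s; exact (morph_cls_op Hf (inr u) s). }
  assert (h_gen : forall u v, H_rel Sigma u v -> h u = h v).
  { intros u v (x&s&y&t&E&->&->); unfold h; f_equal.
    apply cls_eq, cg_base; left; exists x, s, y, t; auto. }
  set (g := quot_lift (op := @free_op S X) (H := H_rel Sigma) h).
  assert (g_morph : is_morph S (@CSigma_op S A X Sigma) aop g)
    by exact (quot_lift_morph h_morph h_gen).
  exists g; split; [exact g_morph|].
  intros c b' (x&s&a&v&E&->&->).
  rewrite g_morph; f_equal; unfold g.
  rewrite (quot_lift_cls (H_rel Sigma) h_morph h_gen).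
  unfold h; rewrite <- (Hnu a); f_equal.
  apply cls_eq, cg_base; right; exists x, s, a; auto.
Qed.

Lemma theta_extension_on_equation (g : CSigma Sigma -> A) :
  extends_theta g ->
  forall x s a, Sigma (EqVC x s a) -> g (cls (rho Sigma) (x, s)) = a.
Proof.
  intros [Hg Ht] x s a E.
  rewrite <- (aop1 A (g _)), <- (aop1 A a), <- Hg.
  apply Ht; exists x, s, a, (mone S); auto.
Qed.

Lemma solution_of_theta_extension (g : CSigma Sigma -> A) :
  extends_theta g -> has_solution_in_A.
Proof.
  intros Hext; pose proof Hext as [Hg _].
  set (b := fun x => g (cls (rho Sigma) (x, mone S))).
  assert (g_gen : forall x s, g (cls (rho Sigma) (x, s)) = aop (b x) s).
  { intros x s; unfold b; rewrite <- (morph_cls_op Hg).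
    unfold free_op; simpl; rewrite mmul1l; reflexivity. }
  exists b; split.
  - intros x s y t E; rewrite <- !g_gen; f_equal.
    apply cls_eq, cg_base; exists x, s, y, t; auto.
  - intros x s a E; rewrite <- g_gen.
    exact (theta_extension_on_equation Hext E).
Qed.

End Equivalences.

Theorem mainTheorem11 (S : monoid) (A : act S) (X : Type)
  (Sigma : system A X) (Hcons : consistent Sigma) :
  ((* (1) Sigma has a solution in A *)
   (exists b : X -> A, @is_solution S A A X (fun a : A => a) Sigma b) <->
   (* (2) A (identified with nu_Sigma(A)) is a retract of A(Sigma) *)
   (exists f : ASigma Sigma -> A,
      @is_morph S (ASigma Sigma) A (@ASigma_op S A X Sigma) aop f /\
      forall a : A, f (nu Sigma a) = a)) /\
  ((exists f : ASigma Sigma -> A,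
      @is_morph S (ASigma Sigma) A (@ASigma_op S A X Sigma) aop f /\
      forall a : A, f (nu Sigma a) = a) <->
   (* (3) theta : D(Sigma) -> A extends to an S-morphism C(Sigma) -> A *)
   (exists g : CSigma Sigma -> A,
      @is_morph S (CSigma Sigma) A (@CSigma_op S A X Sigma) aop g /\
      forall (c : CSigma Sigma) (b : A), @theta_graph S A X Sigma c b -> g c = b)).
Proof.
  clear Hcons.
  change ((has_solution_in_A Sigma <-> exists f, is_retraction (Sigma := Sigma) f) /\
          ((exists f, is_retraction (Sigma := Sigma) f) <->
           exists g, extends_theta (Sigma := Sigma) g)).
  assert (two_three : (exists f, is_retraction (Sigma := Sigma) f) ->
                      exists g, extends_theta (Sigma := Sigma) g).
  { intros [f Hf]; exact (theta_extension_of_retraction Hf). }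
  assert (three_one : (exists g, extends_theta (Sigma := Sigma) g) ->
                      has_solution_in_A Sigma).
  { intros [g Hg]; exact (solution_of_theta_extension Hg). }
  pose proof (retraction_of_solution (Sigma := Sigma)) as one_two.
  tauto.
Qed.
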